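(* Let $\mathbf{k}=(k_1,\ldots,k_n)$ be a sequence of positive integers. Then in $\mathfrak{h}_t^1$, $$\sum_{\sigma\in S_n}z_{k_{\sigma(1)}}\cdots z_{k_{\sigma(n)}}=\sum_{\Pi=\{P_1,\ldots,P_i\}\in\mathcal{P}_n}c_\Pi(t)\,z_{\mathbf{k},P_1}\ast_t\cdots\ast_t z_{\mathbf{k},P_i},$$ where $z_{\mathbf{k},P_j}=z_{\sum_{l\in P_j}k_l}$.
   Context: $t$ is a formal variable; $\mathfrak{h}_t=\mathbb{Q}[t]\langle x,y\rangle$ is the noncommutative polynomial algebra in letters $x,y$ ($1$ = empty word), $\mathfrak{h}^1_t=\mathbb{Q}[t]+\mathfrak{h}_ty$, $z_k=x^{k-1}y$. For a word $w$, $\delta(w)=1$ if $w=1$ and $0$ otherwise. The $t$-harmonic product $\ast_t$ on $\mathfrak{h}^1_t$ is the $\mathbb{Q}[t]$-bilinear product with $1\ast_t w=w\ast_t1=w$ and, for words $w_1,w_2\in\mathfrak{h}^1_t$ and $k,l\ge1$, $z_kw_1\ast_t z_lw_2=z_k(w_1\ast_t z_lw_2)+z_l(z_kw_1\ast_t w_2)+(1-2t)z_{k+l}(w_1\ast_t w_2)+[1-\delta(w_1)\delta(w_2)](t^2-t)x^{k+l}(w_1\ast_t w_2)$; it is commutative and associative. $S_n$ is the symmetric group, $\mathcal{P}_n$ the set of all set partitions of $\{1,\ldots,n\}$. For $m\ge1$, $c_m(t)=(m-1)!\,[t^m-(t-1)^m]$, and for $\Pi=\{P_1,\ldots,P_i\}\in\mathcal{P}_n$,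 $c_\Pi(t)=\prod_{j=1}^ic_{\#P_j}(t)$. *)

From mathcomp Require Import all_boot all_order all_algebra all_fingroup.
Set Implicit Arguments. Unset Strict Implicit. Unset Printing Implicit Defensive.
Import GRing.Theory.
Local Open Scope ring_scope.

(* Coefficient ring Q[t] = {poly rat}, t = 'X. *)
Notation Qt := {poly rat}.

(* Words of h^1_t written in the letters z_k: the sequence [:: k1; ...; kr]
   (all ki >= 1) stands for z_{k1} ... z_{kr}; [::] is the empty word 1. *)
Definition zword := seq nat.

(* The actual word in the letters x (false), y (true): z_k = x^(k-1) y. *)
Definition toxy (u : zword) : seq bool :=
  flatten [seq rcons (nseq k.-1 false) true | k <- u].

(* Elements of h_t are represented as formal Q[t]-linear combinations of words. *)
Definition elt := seq (Qt * zword).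

Definition coef (p : elt) (w : seq bool) : Qt :=
  \sum_(c <- p | toxy c.2 == w) c.1.

Definition scale (a : Qt) (p : elt) : elt := [seq (a * c.1, c.2) | c <- p].

Definition zmul (k : nat) (p : elt) : elt := [seq (c.1, k :: c.2) | c <- p].

(* left multiplication by x^a, on words of h^1 that are nonempty:
   x^a z_m w = z_(a+m) w.  (Only ever applied to nonempty words.) *)
Definition xpow_w (a : nat) (u : zword) : zword :=
  match u with [::] => [:: a] | m :: r => (a + m) :: r end.
Definition xmul (a : nat) (p : elt) : elt := [seq (c.1, xpow_w a c.2) | c <- p].

Fixpoint tstar_w (u v : zword) {struct u} : elt :=
  match u with
  | [::] => [:: (1, v)]
  | k :: u' =>
    let fix aux (v : zword) : elt :=
      match v with
      | [::] => [:: (1, u)]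
      | l :: v' =>
          zmul k (tstar_w u' v) ++ zmul l (aux v')
          ++ scale (1 - 2%:R * 'X) (zmul (k + l) (tstar_w u' v'))
          ++ (if (u' == [::]) && (v' == [::]) then [::]
              else scale ('X ^+ 2 - 'X) (xmul (k + l) (tstar_w u' v')))
      end in aux v
  end.

Definition tstar (p q : elt) : elt :=
  flatten [seq [seq (a.1 * b.1 * d.1, d.2) | d <- tstar_w a.2 b.2] | a <- p, b <- q].

Definition tstar_big (ps : seq elt) : elt := foldr tstar [:: (1, [::])] ps.

Definition cm (m : nat) : Qt := (m.-1)`!%:R * ('X ^+ m - ('X - 1) ^+ m).

Definition cPi (n : nat) (P : {set {set 'I_n}}) : Qt := \prod_(B in P) cm #|B|.

Definition zblock (n : nat) (k : 'I_n -> nat) (B : {set 'I_n}) : elt :=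
  [:: (1, [:: \sum_(l in B) k l]%N)].

Definition set_partitions (n : nat) : seq {set {set 'I_n}} :=
  enum [set P : {set {set 'I_n}} | partition P [set: 'I_n]].

Definition lhs (n : nat) (k : 'I_n -> nat) : elt :=
  [seq ((1 : Qt), [seq k ((s : {perm 'I_n}) i) | i <- enum 'I_n]) | s : {perm 'I_n} <- enum [set: {perm 'I_n}]].

Definition rhs (n : nat) (k : 'I_n -> nat) : elt :=
  flatten [seq scale (cPi P) (tstar_big [seq zblock k B | B <- enum P])
          | P <- set_partitions n].

(* Pair both sides with an arbitrary functional [f] on words in the letters
   [z_k]; coefficients are the case of an indicator. For an index set [A], let
   L(k, A) be the sum of [f] over the words listing [k] along all orderings of
   [A], and R(k, A) the sum over set partitions of [A] of c_Π(t) times [f] at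
   the [*_t]-product of the block letters; R is well defined because single
   letters commute for [*_t]. Since
     z_a *_t z_l w = z_a z_l w + z_l (z_a *_t w) + (1 - 2t) z_(a+l) w
                     + (t^2 - t) x^(a+l) w      (last term only if w <> 1),
   left multiplication by [z_(k x)] relates the families over [A :\ x] and [A]
   in the same way for L (insert [x] into an ordering) and for R (split a
   partition along the block of [x], count pointed blocks, and use
   c_(m+1) = [m = 0] - (1 - 2t) m c_m - (t^2 - t) m (m - 1) c_(m-1)).
   This recursion determines both from their values on smaller sets. *)

From mathcomp Require Import all_boot all_order all_algebra all_fingroup.
From mathcomp Require Import ring zify.
Set Implicit Arguments. Unset Strict Implicit. Unset Printing Implicit Defensive.
Import GRing.Theory.
Local Open Scope ring_scope.

Definition eval_elt (f : zword -> Qt) (p : elt) : Qt := \sum_(c <- p) c.1 * f c.2.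

Lemma eval_elt0 f : eval_elt f [::] = 0.
Proof. exact: big_nil. Qed.

Lemma eval_elt_seq1 f a u : eval_elt f [:: (a, u)] = a * f u.
Proof. exact: big_seq1. Qed.

Lemma eval_elt_cat f p q : eval_elt f (p ++ q) = eval_elt f p + eval_elt f q.
Proof. exact: big_cat. Qed.

Lemma eval_elt_flatten f ps : eval_elt f (flatten ps) = \sum_(p <- ps) eval_elt f p.
Proof.
by elim: ps => [|p ps IH]; rewrite ?big_nil ?big_cons ?eval_elt0 // eval_elt_cat IH.
Qed.

Lemma eval_elt_zmul f a p : eval_elt f (zmul a p) = eval_elt (fun u => f (a :: u)) p.
Proof. exact: big_map. Qed.

Lemma eval_elt_scale f a p : eval_elt f (scale a p) = a * eval_elt f p.
Proof. by rewrite /eval_elt big_map mulr_sumr; apply: eq_bigr => c _; rewrite mulrA. Qed.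

Lemma coef_eval_elt p w : coef p w = eval_elt (fun u => (toxy u == w)%:R) p.
Proof.
rewrite /coef /eval_elt big_mkcond; apply: eq_bigr => c _.
by case: eqP; rewrite ?mulr1 ?mulr0.
Qed.

Definition zcoef : Qt := 1 - 2%:R * 'X.
Definition xcoef : Qt := 'X ^+ 2 - 'X.

(* [f] at [x^c w]; the value [0] at [w = 1] is the factor [1 - δ(w1)δ(w2)] of [*_t]. *)
Definition xshift (f : zword -> Qt) (c : nat) (w : zword) : Qt :=
  if w is m :: r then f ((c + m)%N :: r) else 0.

Fixpoint zstar (a : nat) (u : zword) (f : zword -> Qt) : Qt :=
  if u is l :: v then
    f [:: a, l & v] + zstar a v (fun w => f (l :: w)) + zcoef * f ((a + l)%N :: v)
    + xcoef * xshift f (a + l) v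
  else f [:: a].

Lemma zstar_nil a f : zstar a [::] f = f [:: a].
Proof. by []. Qed.

Lemma zstar_cons a l v f : zstar a (l :: v) f =
  f [:: a, l & v] + zstar a v (fun w => f (l :: w)) + zcoef * f ((a + l)%N :: v)
  + xcoef * xshift f (a + l) v.
Proof. by []. Qed.

Arguments zstar : simpl never.

Lemma tstar_letter_cons a l v : tstar_w [:: a] (l :: v) =
  zmul a [:: (1, l :: v)] ++ zmul l (tstar_w [:: a] v)
  ++ scale zcoef (zmul (a + l) [:: (1, v)])
  ++ (if v == [::] then [::] else scale xcoef (xmul (a + l) [:: (1, v)])).
Proof. by []. Qed.

Lemma eval_tstar_letter a u f : eval_elt f (tstar_w [:: a] u) = zstar a u f.
Proof.
elim: u f => [|l v IH] f; first by rewrite eval_elt_seq1 mul1r.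
rewrite tstar_letter_cons zstar_cons !eval_elt_cat !eval_elt_zmul IH eval_elt_scale.
rewrite eval_elt_zmul !eval_elt_seq1 !mul1r.
case: v {IH} => [|m r] /=; first by rewrite eval_elt0 mulr0 !addr0 !addrA.
by rewrite eval_elt_seq1 mulr1 !addrA.
Qed.

Lemma eq_zstar a u f g : f =1 g -> zstar a u f = zstar a u g.
Proof.
elim: u f g => [|l v IH] f g fg; rewrite ?zstar_nil ?zstar_cons ?fg //.
rewrite (IH _ (fun w => g (l :: w))) //.
by case: v {IH} => [|m r] //=; rewrite fg.
Qed.

Lemma zstar_cons_fun a b l v f :
  zstar a v (fun w => zstar b (l :: w) f) =
  zstar a v (fun w => f [:: b, l & w] + zstar b w (fun u => f (l :: u))
    + zcoef * f ((b + l)%N :: w) + xcoef * xshift f (b + l) w).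
Proof. exact: eq_zstar. Qed.

Lemma zstarD a u f g : zstar a u (fun w => f w + g w) = zstar a u f + zstar a u g.
Proof.
elim: u f g => [|l v IH] f g //; rewrite !zstar_cons IH.
case: v {IH} => [|m r] /=; rewrite ?mulr0 ?addr0; ring.
Qed.

Lemma zstarZ a u c f : zstar a u (fun w => c * f w) = c * zstar a u f.
Proof.
elim: u f => [|l v IH] f //; rewrite !zstar_cons IH.
case: v {IH} => [|m r] /=; rewrite ?mulr0 ?addr0; ring.
Qed.

Lemma zstar_xshift a v f c : zstar a v (xshift f c) =
  f ((c + a)%N :: v) + xshift (fun w => zstar a w f) c v - xshift (fun w => f (a :: w)) c v.
Proof.
case: v => [|m [|p q]]; rewrite /= ?zstar_nil ?zstar_cons /= ?zstar_nil ?zstar_cons /=.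
- by rewrite addr0 subr0.
- rewrite !mulr0 !addr0 (addnCA c a m); ring.
- rewrite (addnCA c a m) -!addnA (addnCA c a); ring.
Qed.

Lemma zstarC a b u f :
  zstar a u (fun w => zstar b w f) = zstar b u (fun w => zstar a w f).
Proof.
elim: u f => [|l v IH] f.
  rewrite !zstar_nil !zstar_cons /= !zstar_nil /= !mulr0 !addr0 (addnC a b); ring.
rewrite [LHS]zstar_cons [RHS]zstar_cons !zstar_cons_fun.
rewrite !zstarD !zstarZ !zstar_xshift IH !zstar_cons.
have e1 : (b + a = a + b)%N by lia.
have e2 : (b + l + a = a + b + l)%N by lia.
have e3 : (a + l + b = a + b + l)%N by lia.
have e4 : (b + (a + l) = a + b + l)%N by lia.
have e5 : (a + (b + l) = a + b + l)%N by lia.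
case: v {IH} => [|m r] /=; rewrite ?zstar_nil /= e1 e2 e3 e4 e5 ?mulr0 ?subr0 ?addr0; ring.
Qed.

Fixpoint zstar_seq (cs : seq nat) (f : zword -> Qt) : Qt :=
  if cs is c :: cs' then zstar_seq cs' (fun u => zstar c u f) else f [::].

Lemma eq_zstar_seq cs f g : f =1 g -> zstar_seq cs f = zstar_seq cs g.
Proof.
elim: cs f g => [|c cs IH] f g fg /=; first exact: fg.
by apply: IH => u; apply: eq_zstar.
Qed.

Lemma eval_tstar_big_letters cs f :
  eval_elt f (tstar_big [seq [:: ((1 : Qt), [:: c])] | c <- cs]) = zstar_seq cs f.
Proof.
elim: cs f => [|c cs IH] f /=; first by rewrite eval_elt_seq1 mul1r.
rewrite -IH /tstar /= cats0 eval_elt_flatten big_map /eval_elt.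
apply: eq_bigr => b _; rewrite big_map -eval_tstar_letter /eval_elt mulr_sumr.
by apply: eq_bigr => d _; rewrite mul1r mulrA.
Qed.

Lemma zstar_seq_mid s1 c s2 f :
  zstar_seq (s1 ++ c :: s2) f = zstar_seq (c :: s1 ++ s2) f.
Proof.
elim: s1 f => [|b s1 IH] f //=; rewrite IH /=.
by apply: eq_zstar_seq => u; rewrite zstarC.
Qed.

Lemma perm_zstar_seq s t f : perm_eq s t -> zstar_seq s f = zstar_seq t f.
Proof.
elim: s t f => [|c s IH] t f st.
  by rewrite perm_sym in st; rewrite (perm_nilP st).
have ct : c \in t by rewrite -(perm_mem st) mem_head.
case/splitPr: ct st => t1 t2 st.
rewrite zstar_seq_mid /=; apply: IH.
by rewrite -(perm_cons c) (perm_trans st) // perm_sym -cat1s perm_catCA.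
Qed.

Lemma exchange_big_setD1 (T : finType) (R : nmodType) (C : {set T}) (F : T -> T -> R) :
  \sum_(i in C) \sum_(j in C :\ i) F i j = \sum_(j in C) \sum_(i in C :\ j) F i j.
Proof.
rewrite (exchange_big_dep (mem C)) /=; last by move=> i j _; rewrite inE => /andP[].
apply: eq_bigr => j jC; apply: eq_bigl => i.
by rewrite !inE jC andbT andbC eq_sym.
Qed.

Lemma setD1C (T : finType) (C : {set T}) x y : C :\ x :\ y = C :\ y :\ x.
Proof. by apply/setP => z; rewrite !inE andbCA. Qed.

Lemma exchange_big_setD1_3 (T : finType) (R : nmodType) (C : {set T})
    (F : T -> T -> T -> R) :
  \sum_(i in C) \sum_(j in C :\ i) \sum_(y in C :\ j :\ i) F i j y =
  \sum_(y in C) \sum_(i in C :\ y) \sum_(j in C :\ y :\ i) F i j y.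
Proof.
transitivity (\sum_(i in C) \sum_(y in C :\ i) \sum_(j in C :\ i :\ y) F i j y).
  apply: eq_bigr => i _; rewrite -(exchange_big_setD1 (C :\ i) (fun j y => F i j y)).
  by apply: eq_bigr => j _; rewrite setD1C.
rewrite (exchange_big_setD1 C (fun i y => \sum_(j in C :\ i :\ y) F i j y)).
by apply: eq_bigr => y _; apply: eq_bigr => i _; rewrite setD1C.
Qed.

Section Arrangements.
Variable n : nat.
Implicit Types (k : 'I_n -> nat) (A C : {set 'I_n}) (f g : zword -> Qt).

Fixpoint arrangement_sum_rec k (m : nat) A f : Qt :=
  if m is m'.+1 then \sum_(y in A) arrangement_sum_rec k m' (A :\ y) (fun u => f (k y :: u))
  else f [::].

Definition arrangement_sum k A f := arrangement_sum_rec k #|A| A f.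

Lemma arrangement_sum0 k f : arrangement_sum k set0 f = f [::].
Proof. by rewrite /arrangement_sum cards0. Qed.

Lemma arrangement_sumE k A f : A != set0 ->
  arrangement_sum k A f = \sum_(y in A) arrangement_sum k (A :\ y) (fun u => f (k y :: u)).
Proof.
case/set0Pn=> y yA; rewrite /arrangement_sum.
have cardA : #|A| = #|A :\ y|.+1 by rewrite (cardsD1 y A) yA.
rewrite cardA; apply: eq_bigr => z zA.
suff -> : #|A :\ z| = #|A :\ y| by [].
by apply/eqP; rewrite -eqSS -cardA (cardsD1 z A) zA.
Qed.

Lemma eq_arrangement_sum k A f g : f =1 g -> arrangement_sum k A f = arrangement_sum k A g.
Proof.
rewrite /arrangement_sum; move: #|A| => m; elim: m A f g => [|m IH] A f g fg /=.
  exact: fg.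
by apply: eq_bigr => y _; apply: IH.
Qed.

Lemma arrangement_sumD k A f g :
  arrangement_sum k A (fun u => f u + g u) = arrangement_sum k A f + arrangement_sum k A g.
Proof.
rewrite /arrangement_sum; move: #|A| => m; elim: m A f g => [|m IH] A f g //=.
by rewrite -big_split; apply: eq_bigr => y _; rewrite IH.
Qed.

Lemma arrangement_sumZ k A c f :
  arrangement_sum k A (fun u => c * f u) = c * arrangement_sum k A f.
Proof.
rewrite /arrangement_sum; move: #|A| => m; elim: m A f => [|m IH] A f //=.
by rewrite mulr_sumr; apply: eq_bigr => y _; rewrite IH.
Qed.

Lemma arrangement_sum_xshift k A f c : arrangement_sum k A (xshift f c) =
  \sum_(i in A) arrangement_sum k (A :\ i) (fun u => f ((c + k i)%N :: u)).
Proof.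
have [->|A0] := eqVneq A set0; first by rewrite arrangement_sum0 big_set0.
exact: arrangement_sumE.
Qed.

Lemma eq_arrangement_sum_in k k' A f :
  {in A, k =1 k'} -> arrangement_sum k A f = arrangement_sum k' A f.
Proof.
rewrite /arrangement_sum; move: #|A| => m; elim: m A f => [|m IH] A f kk' //=.
apply: eq_bigr => y yA; rewrite kk' //; apply: IH => z.
by rewrite inE => /andP[_ /kk'].
Qed.

Lemma arrangement_sum_tuples k m A f : #|A| = m ->
  arrangement_sum k A f = \sum_(t : m.-tuple 'I_n | uniq t && all (mem A) t) f (map k t).
Proof.
elim: m A f => [|m IH] A f cardA.
  have -> : A = set0 by apply/eqP; rewrite -cards_eq0 cardA.
  rewrite arrangement_sum0 (big_pred1 [tuple]) // => t.
  by case: t => -[|//] sP; apply/esym/eqP; apply: val_inj.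
rewrite arrangement_sumE -?card_gt0 ?cardA //.
rewrite (reindex (fun p : 'I_n * m.-tuple 'I_n => [tuple of p.1 :: p.2])) /=; last first.
  apply: onW_bij; exists (fun t : m.+1.-tuple 'I_n => (thead t, [tuple of behead t])).
    by move=> [y t] /=; congr (_, _); apply: val_inj.
  by move=> t; rewrite [RHS]tuple_eta.
transitivity (\sum_(y in A) \sum_(t : m.-tuple 'I_n | uniq t && all (mem (A :\ y)) t)
    f (k y :: map k t)).
  apply: eq_bigr => y yA; apply: IH.
  by move: cardA; rewrite (cardsD1 y A) yA => -[].
rewrite pair_big_dep /=; apply: eq_bigl => -[y t] /=.
have -> (s : seq 'I_n) : all (mem (A :\ y)) s = (y \notin s) && all (mem A) s.
  elim: s => //= z s ->; rewrite !inE negb_or (eq_sym z y).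
  by case: (y == z); case: (z \in A); case: (y \in s).
by case: (y \in A); case: (y \in t); case: (uniq t); case: (all (mem A) t).
Qed.

Definition kadd k (i : 'I_n) (c : nat) : 'I_n -> nat :=
  fun j => if j == i then (k j + c)%N else k j.

Lemma kadd_eq k i c : kadd k i c i = (k i + c)%N.
Proof. by rewrite /kadd eqxx. Qed.

Lemma kadd_neq k i c j : j != i -> kadd k i c j = k j.
Proof. by rewrite /kadd => /negbTE ->. Qed.

Lemma arrangement_sum_kadd_notin k i c A f :
  i \notin A -> arrangement_sum (kadd k i c) A f = arrangement_sum k A f.
Proof.
move=> iA; apply: eq_arrangement_sum_in => j jA; apply: kadd_neq.
by apply: contraNneq iA => <-.
Qed.

Lemma arrangement_sum_kadd k i c A f : i \in A ->
  arrangement_sum (kadd k i c) A f =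
  arrangement_sum k (A :\ i) (fun u => f ((k i + c)%N :: u))
  + \sum_(y in A :\ i) arrangement_sum (kadd k i c) (A :\ y) (fun u => f (k y :: u)).
Proof.
move=> iA; rewrite arrangement_sumE; last by apply/set0Pn; exists i.
rewrite (big_setD1 i iA) /= kadd_eq arrangement_sum_kadd_notin ?setD11 //.
congr (_ + _); apply: eq_bigr => y; rewrite !inE => /andP[yi _].
by rewrite kadd_neq.
Qed.

Lemma sum_arrangement_sum_kadd k C c f :
  \sum_(i in C) arrangement_sum (kadd k i c) C f =
  \sum_(i in C) arrangement_sum k (C :\ i) (fun u => f ((c + k i)%N :: u))
  + \sum_(y in C) \sum_(i in C :\ y)
      arrangement_sum (kadd k i c) (C :\ y) (fun u => f (k y :: u)).
Proof.
rewrite -exchange_big_setD1 -big_split; apply: eq_bigr => i iC.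
by rewrite arrangement_sum_kadd // addnC.
Qed.

Lemma sum_arrangement_sum_kadd2 k C c f :
  \sum_(i in C) \sum_(j in C :\ i) arrangement_sum (kadd k i (c + k j)) (C :\ j) f =
  \sum_(i in C) \sum_(j in C :\ i)
    arrangement_sum k (C :\ i :\ j) (fun u => f ((c + k i + k j)%N :: u))
  + \sum_(y in C) \sum_(i in C :\ y) \sum_(j in C :\ y :\ i)
      arrangement_sum (kadd k i (c + k j)) (C :\ y :\ j) (fun u => f (k y :: u)).
Proof.
rewrite -exchange_big_setD1_3 -big_split; apply: eq_bigr => i iC.
rewrite -big_split; apply: eq_bigr => j; rewrite in_setD1 => /andP[ji jC].
have iCj : i \in C :\ j by rewrite in_setD1 iC andbT eq_sym.
rewrite arrangement_sum_kadd // addnCA addnA setD1C; congr (_ + _).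
by apply: eq_bigr => y _; rewrite setD1C.
Qed.

(* Left [*_t]-multiplication by [z_(k x)]: inserting [x] into a word over [A :\ x],
   or merging it into one letter [i], or into two adjacent letters [i], [j]. *)
Definition merge_recursive (F : ('I_n -> nat) -> {set 'I_n} -> (zword -> Qt) -> Qt) :=
  forall k A x f, x \in A ->
  F k (A :\ x) (fun u => zstar (k x) u f) =
    F k A f
    + zcoef * \sum_(i in A :\ x) F (kadd k i (k x)) (A :\ x) f
    + xcoef * \sum_(i in A :\ x) \sum_(j in A :\ x :\ i)
                F (kadd k i (k x + k j)) (A :\ x :\ j) f.

Lemma arrangement_sum_merge_recursive : merge_recursive arrangement_sum.
Proof.
move=> k A x f xA; move cC: #|A :\ x| => m.
elim: m A f xA cC => [|m IH] A f xA cC.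
  have C0 : A :\ x = set0 by apply/eqP; rewrite -cards_eq0 cC.
  have -> : A = [set x] by rewrite -(setD1K xA) C0 setU0.
  rewrite setDv !big_set0 !mulr0 !addr0 arrangement_sum0 zstar_nil.
  rewrite arrangement_sumE; last by apply/set0Pn; exists x; rewrite inE.
  by rewrite big_set1 setDv arrangement_sum0.
set C := A :\ x.
have C0 : C != set0 by rewrite -card_gt0 cC.
rewrite arrangement_sumE //.
under eq_bigr => y _ do under eq_arrangement_sum => w do rewrite zstar_cons.
under eq_bigr => y _ do
  rewrite !arrangement_sumD !arrangement_sumZ arrangement_sum_xshift.
have prefix_x : \sum_(y in C) arrangement_sum k (C :\ y) (fun w => f [:: k x, k y & w]) =
    arrangement_sum k C (fun u => f (k x :: u)).
  by rewrite [RHS]arrangement_sumE.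
have prefix_y y : y \in C ->
    arrangement_sum k (C :\ y) (fun w => zstar (k x) w (fun u => f (k y :: u))) =
    arrangement_sum k (A :\ y) (fun u => f (k y :: u))
    + zcoef * \sum_(i in C :\ y) arrangement_sum (kadd k i (k x)) (C :\ y) (fun u => f (k y :: u))
    + xcoef * \sum_(i in C :\ y) \sum_(j in C :\ y :\ i)
        arrangement_sum (kadd k i (k x + k j)) (C :\ y :\ j) (fun u => f (k y :: u)).
  move=> yC; have /andP[yx yA] : (y != x) && (y \in A) by rewrite -in_setD1.
  have xAy : x \in A :\ y by rewrite in_setD1 eq_sym yx.
  have cCy : #|A :\ y :\ x| = m.
    by rewrite setD1C; move: cC; rewrite (cardsD1 y (A :\ x)) yC => -[].
  by rewrite /C setD1C IH.
have split_A : arrangement_sum k A f = arrangement_sum k C (fun u => f (k x :: u))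
    + \sum_(y in C) arrangement_sum k (A :\ y) (fun u => f (k y :: u)).
  by rewrite arrangement_sumE ?(big_setD1 x xA) //; apply/set0Pn; exists x.
rewrite !big_split /= prefix_x (eq_bigr _ prefix_y) !big_split /= split_A.
rewrite sum_arrangement_sum_kadd sum_arrangement_sum_kadd2 -!mulr_sumr; ring.
Qed.
End Arrangements.

Lemma perm_enum_setU1 (T : finType) (x : T) (A : {set T}) :
  x \notin A -> perm_eq (enum (x |: A)) (x :: enum A).
Proof.
move=> xA; apply: uniq_perm; rewrite ?enum_uniq //=; first by rewrite mem_enum xA enum_uniq.
by move=> y; rewrite in_cons !mem_enum in_setU1.
Qed.

Section PartitionSums.
Variable n : nat.
Implicit Types (k : 'I_n -> nat) (A B : {set 'I_n}) (f g : zword -> Qt).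
Implicit Types (P Q : {set {set 'I_n}}).

Definition bsum k B : nat := (\sum_(l in B) k l)%N.

Definition partition_sum k A f : Qt :=
  \sum_(P | partition P A) cPi P * zstar_seq [seq bsum k B | B <- enum P] f.

Lemma partition_sum0 k f : partition_sum k set0 f = f [::].
Proof.
rewrite /partition_sum (eq_bigl (pred1 set0)) => [|P]; last exact: partition_set0.
by rewrite big_pred1_eq /cPi big_set0 enum_set0 mul1r.
Qed.

Lemma eq_partition_sum_in k k' A f :
  {in A, k =1 k'} -> partition_sum k A f = partition_sum k' A f.
Proof.
move=> kk'; apply: eq_bigr => P partP; congr (_ * zstar_seq _ f).
apply/eq_in_map => B; rewrite mem_enum => BP; apply: eq_bigr => l lB; apply: kk'.
by move/subsetP: (partitionS partP BP); apply.
Qed.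

Lemma partition_sum_kadd_notin k i c A f :
  i \notin A -> partition_sum (kadd k i c) A f = partition_sum k A f.
Proof.
move=> iA; apply: eq_partition_sum_in => j jA; apply: kadd_neq.
by apply: contraNneq iA => <-.
Qed.

Lemma bsumU1 k i B : i \notin B -> bsum k (i |: B) = (k i + bsum k B)%N.
Proof. by move=> iB; rewrite /bsum big_setU1. Qed.

Lemma bsum_kadd_notin k i c B : i \notin B -> bsum (kadd k i c) B = bsum k B.
Proof.
move=> iB; apply: eq_bigr => j jB; apply: kadd_neq.
by apply: contraNneq iB => <-.
Qed.

Lemma pblock_split A x P B Q : x \in A -> partition P A ->
  pblock P x :\ x = B -> P :\ pblock P x = Q ->
  (B \subset A :\ x) && partition Q (A :\: (x |: B)).
Proof.
move=> xA partP <- <-.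
have xP : x \in cover P by rewrite (cover_partition partP).
have PxP := pblock_mem xP.
rewrite setD1K ?mem_pblock // partitionD1 // andbT subsetD1 !inE eqxx /= andbT.
exact: subset_trans (subsetDl _ _) (partitionS partP PxP).
Qed.

Lemma partition_setU1_block A x B Q : x \in A -> B \subset A :\ x ->
    partition Q (A :\: (x |: B)) ->
  [/\ partition ((x |: B) |: Q) A, (x |: B) \notin Q & pblock ((x |: B) |: Q) x = x |: B].
Proof.
move=> xA BAx partQ.
have xB : x \notin B by move: BAx; rewrite subsetD1 => /andP[].
have xBA : x |: B \subset A.
  by rewrite subUset sub1set xA (subset_trans BAx) ?subsetDl.
have xBQ : (x |: B) \notin Q.
  apply/negP => /(partitionS partQ)/subsetP/(_ x).
  by rewrite !inE eqxx /= => /(_ isT).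
have partP : partition ((x |: B) |: Q) A.
  have xB0 : x |: B != set0 by apply/set0Pn; exists x; rewrite !inE eqxx.
  have dis : [disjoint x |: B & A :\: (x |: B)].
    by rewrite disjoints_subset setDE setCI setCK subsetUr.
  have xBUA : (x |: B) :|: (A :\: (x |: B)) = A.
    apply/setP => z; rewrite in_setU in_setD.
    by case: (boolP (z \in x |: B)) => //= /(subsetP xBA) ->.
  by have := partitionU1 partQ xB0 dis; rewrite xBUA.
split=> //; apply: def_pblock; rewrite ?(partition_trivIset partP) ?setU11 //.
Qed.

Lemma partition_sum_block k A x f : x \in A ->
  partition_sum k A f = \sum_(B : {set 'I_n} | B \subset A :\ x)
     cm #|x |: B| * partition_sum k (A :\: (x |: B)) (fun u => zstar (bsum k (x |: B)) u f).
Proof.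
move=> xA; under [RHS]eq_bigr => B _ do rewrite /partition_sum mulr_sumr.
rewrite pair_big_dep /= /partition_sum.
rewrite (reindex_onto (fun BQ : {set 'I_n} * {set {set 'I_n}} => (x |: BQ.1) |: BQ.2)
   (fun P => (pblock P x :\ x, P :\ pblock P x))) /=; last first.
  move=> P partP; have xP : x \in cover P by rewrite (cover_partition partP).
  by rewrite setD1K ?mem_pblock // setD1K // pblock_mem.
apply: eq_big => [[B Q]|[B Q]] /=.
  apply/idP/idP => [/andP[partP /eqP[eB eQ]]|/andP[BAx partQ]].
    exact: pblock_split eB eQ.
  have [partP xBQ ->] := partition_setU1_block xA BAx partQ.
  have xB : x \notin B by move: BAx; rewrite subsetD1 => /andP[].
  by rewrite partP /= (setU1K xB) (setU1K xBQ).
move=> /andP[partP /eqP[eB eQ]].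
have /andP[BAx partQ] := pblock_split xA partP eB eQ.
have [_ xBQ _] := partition_setU1_block xA BAx partQ.
rewrite /cPi big_setU1 //= -mulrA; congr (_ * _).
rewrite (@perm_zstar_seq _ (bsum k (x |: B) :: [seq bsum k B0 | B0 <- enum Q])) //.
by rewrite (perm_map (bsum k) (perm_enum_setU1 xBQ)).
Qed.
End PartitionSums.

Lemma sum_pointed_subsets (T : finType) (R : pzSemiRingType) (D : {set T})
    (F : {set T} -> R) :
  \sum_(i in D) \sum_(B : {set T} | B \subset D :\ i) F (i |: B) =
  \sum_(B : {set T} | B \subset D) #|B|%:R * F B.
Proof.
under [RHS]eq_bigr => B _ do rewrite mulr_natl -sumr_const.
rewrite (exchange_big_dep (mem D)) /=; last by move=> B i /subsetP BD /BD.
apply: eq_bigr => i iD.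
rewrite [RHS](reindex_onto (fun B => i |: B) (fun B => B :\ i)) /=; last first.
  by move=> B /andP[_ iB]; rewrite setD1K.
apply: eq_bigl => B; rewrite subUset sub1set iD subsetD1 !inE eqxx andbT /=.
by congr (_ && _); apply/idP/eqP => [/setU1K|<-] //; rewrite !inE eqxx.
Qed.

Lemma sum_bipointed_subsets (T : finType) (R : pzSemiRingType) (D : {set T})
    (F : {set T} -> R) :
  \sum_(i in D) \sum_(j in D :\ i) \sum_(B : {set T} | B \subset D :\ i :\ j)
    F (i |: (j |: B)) =
  \sum_(B : {set T} | B \subset D) (#|B| * #|B|.-1)%:R * F B.
Proof.
under eq_bigr => i iD do rewrite (sum_pointed_subsets (D :\ i) (fun B => F (i |: B))).
under [RHS]eq_bigr => B _ do rewrite natrM -mulrA.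
rewrite -(sum_pointed_subsets D (fun B => #|B|.-1%:R * F B)).
apply: eq_bigr => i iD; apply: eq_bigr => B; rewrite subsetD1 => /andP[_ iB].
by rewrite cardsU1 iB.
Qed.

Lemma cmS m : cm m.+1 =
  (m == 0%N)%:R - zcoef * m%:R * cm m - xcoef * (m * m.-1)%:R * cm m.-1.
Proof.
rewrite /cm /zcoef /xcoef.
by case: m => [|[|m]]; rewrite /= ?factS ?fact0 ?natrM ?exprS ?expr0 ?mul1n; ring.
Qed.

Section PartitionMerge.
Variables (n : nat) (k : 'I_n -> nat) (c : nat) (f : zword -> Qt).
Implicit Types D B : {set 'I_n}.

Let block_term D B :=
  partition_sum k (D :\: B) (fun u => zstar (c + bsum k B) u f).

Lemma partition_sum_zstar D :
  partition_sum k D (fun u => zstar c u f) =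
  \sum_(B : {set 'I_n} | B \subset D) (#|B| == 0%N)%:R * block_term D B.
Proof.
rewrite (bigD1 set0) ?sub0set //= cards0 mul1r big1 ?addr0.
  by rewrite /block_term setD0 /bsum big_set0 addn0.
by move=> B /andP[_ B0]; rewrite cards_eq0 (negbTE B0) mul0r.
Qed.

Lemma partition_sum_kadd_sum D :
  \sum_(i in D) partition_sum (kadd k i c) D f =
  \sum_(B : {set 'I_n} | B \subset D) (#|B|%:R * cm #|B|) * block_term D B.
Proof.
under [RHS]eq_bigr => B _ do rewrite -mulrA.
rewrite -(sum_pointed_subsets D (fun B => cm #|B| * block_term D B)).
apply: eq_bigr => i iD; rewrite (partition_sum_block _ _ iD).
apply: eq_bigr => B; rewrite subsetD1 => /andP[_ iB].
rewrite partition_sum_kadd_notin ?inE ?eqxx // bsumU1 // bsum_kadd_notin // kadd_eq.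
by rewrite /block_term bsumU1 // (addnC (k i)) -addnA.
Qed.

Lemma partition_sum_kadd2_sum D :
  \sum_(i in D) \sum_(j in D :\ i) partition_sum (kadd k i (c + k j)) (D :\ j) f =
  \sum_(B : {set 'I_n} | B \subset D)
    ((#|B| * #|B|.-1)%:R * cm #|B|.-1) * block_term D B.
Proof.
under [RHS]eq_bigr => B _ do rewrite -mulrA.
rewrite -(sum_bipointed_subsets D (fun B => cm #|B|.-1 * block_term D B)).
apply: eq_bigr => i iD; apply: eq_bigr => j; rewrite in_setD1 => /andP[ji jD].
have iDj : i \in D :\ j by rewrite in_setD1 eq_sym ji.
rewrite (partition_sum_block _ _ iDj) (setD1C D j i); apply: eq_bigr => B.
rewrite subsetD1 => /andP[/subsetP BDi jB].
have iB : i \notin B by apply/negP => /BDi; rewrite !inE eqxx.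
have ijB : i \notin j |: B by rewrite !inE negb_or eq_sym ji.
rewrite partition_sum_kadd_notin ?inE ?eqxx //.
rewrite (cardsU1 i (j |: B)) ijB (cardsU1 j B) jB cardsU1 iB.
rewrite bsumU1 // bsum_kadd_notin // kadd_eq /block_term bsumU1 // bsumU1 //.
have -> : (k i + (c + k j) + bsum k B = c + (k i + (k j + bsum k B)))%N by lia.
by rewrite setDDl setUCA.
Qed.
End PartitionMerge.

Lemma partition_sum_merge_recursive n : merge_recursive (@partition_sum n).
Proof.
move=> k A x f xA.
have block_x : partition_sum k A f = \sum_(B : {set 'I_n} | B \subset A :\ x)
    cm #|B|.+1 * partition_sum k (A :\ x :\: B) (fun u => zstar (k x + bsum k B) u f).
  rewrite (partition_sum_block _ _ xA); apply: eq_bigr => B.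
  rewrite subsetD1 => /andP[_ xB].
  by rewrite cardsU1 xB bsumU1 // setDDl.
rewrite block_x partition_sum_zstar partition_sum_kadd_sum partition_sum_kadd2_sum.
rewrite !mulr_sumr -!big_split; apply: eq_bigr => B _ /=.
rewrite cmS; ring.
Qed.

Section Uniqueness.
Variable n : nat.
Variables F G : ('I_n -> nat) -> {set 'I_n} -> (zword -> Qt) -> Qt.
Hypothesis FG0 : forall k f, F k set0 f = G k set0 f.
Hypotheses (recF : merge_recursive F) (recG : merge_recursive G).

Lemma merge_recursive_unique k A f : F k A f = G k A f.
Proof.
move: {2}#|A| (leqnn #|A|) => m; elim: m k A f => [|m IH] k A f cardA.
  by move: cardA; rewrite leqn0 cards_eq0 => /eqP->.
have [->|/set0Pn[x xA]] := eqVneq A set0; first exact: FG0.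
have cardAx : (#|A :\ x| <= m)%N by move: cardA; rewrite (cardsD1 x A) xA.
have sum1 : \sum_(i in A :\ x) F (kadd k i (k x)) (A :\ x) f =
            \sum_(i in A :\ x) G (kadd k i (k x)) (A :\ x) f.
  by apply: eq_bigr => i _; rewrite IH.
have sum2 : \sum_(i in A :\ x) \sum_(j in A :\ x :\ i)
              F (kadd k i (k x + k j)) (A :\ x :\ j) f =
            \sum_(i in A :\ x) \sum_(j in A :\ x :\ i)
              G (kadd k i (k x + k j)) (A :\ x :\ j) f.
  apply: eq_bigr => i _; apply: eq_bigr => j _; rewrite IH //.
  exact: leq_trans (subset_leq_card (subD1set _ _)) cardAx.
move: (recF k f xA) (recG k f xA); rewrite IH // sum1 sum2 => ->.
by move/addIr/addIr.
Qed.
End Uniqueness.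

Lemma arrangement_sum_eq_partition_sum n (k : 'I_n -> nat) (A : {set 'I_n}) f :
  arrangement_sum k A f = partition_sum k A f.
Proof.
apply: merge_recursive_unique k A f => [k f||].
- by rewrite arrangement_sum0 partition_sum0.
- exact: arrangement_sum_merge_recursive.
- exact: partition_sum_merge_recursive.
Qed.

Lemma eval_lhs n (k : 'I_n -> nat) f :
  eval_elt f (lhs k) = arrangement_sum k [set: 'I_n] f.
Proof.
rewrite (arrangement_sum_tuples _ _ (etrans (cardsT _) (card_ord n))).
rewrite /lhs /eval_elt big_map big_enum /=.
pose h (s : {perm 'I_n}) : n.-tuple 'I_n := map_tuple s (ord_tuple n).
have h_inj : injective h.
  move=> s1 s2 /(congr1 val) /= E; apply/permP => i.
  by move/eq_in_map: E; apply; rewrite mem_enum.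
rewrite [RHS](eq_bigl (mem (h @: [set: {perm 'I_n}]))) => [|t]; last first.
  apply/idP/imsetP => [/andP[/tuple_uniqP tu _]|[s _ ->]].
    exists (perm tu); rewrite ?inE //; apply: val_inj => /=.
    by rewrite -{1}(map_tnth_enum t); apply: eq_map => i; rewrite permE.
  rewrite /= map_inj_uniq ?val_ord_tuple ?enum_uniq //; last exact: perm_inj.
  by apply/allP => i _; apply: in_setT.
rewrite big_imset /=; last by move=> s1 s2 _ _ /h_inj.
by apply: eq_big => [s|s _]; rewrite ?inE // mul1r -map_comp.
Qed.

Lemma eval_rhs n (k : 'I_n -> nat) f :
  eval_elt f (rhs k) = partition_sum k [set: 'I_n] f.
Proof.
rewrite /rhs eval_elt_flatten big_map /set_partitions big_enum /partition_sum.
apply: eq_big => [P|P _]; first by rewrite inE.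
by rewrite eval_elt_scale -eval_tstar_big_letters -map_comp.
Qed.

Theorem lemma3p1 (n : nat) (k : 'I_n -> nat) (hk : forall i, (0 < k i)%N) :
  forall w : seq bool, coef (lhs k) w = coef (rhs k) w.
Proof.
by move=> w; rewrite !coef_eval_elt eval_lhs eval_rhs arrangement_sum_eq_partition_sum.
Qed.
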